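(* Let $\alpha\in(0,1)$ be irrational, and let $$B_n=\Big|\prod_{t=1}^{q_n-1}\frac{s_{nt}}{2\sin(\pi t/q_n)}\Big|,\qquad M_n=\lfloor(q_n-1)/2\rfloor,\qquad \tau_n=\lfloor q_n^{1/2}\rfloor.$$ Then for sufficiently large $n$, $$\log(B_n)=-2\pi^2\frac{c_n}{q_n^2}\sum_{t=1}^{M_n-1}\frac{D_t(\alpha_n^-)}{\sin(\pi t/q_n)\sin(\pi(t+1)/q_n)}-2\sum_{t=1}^{\tau_n}\sum_{j=2}^{\tau_n}\frac1j\Big(\frac{c_n\xi_{nt}}{t}\Big)^j+O(\tau_n^{-1}).$$
   Context: Continued fraction notation: - $\alpha=[0;a_1,a_2,\ldots]$. - $q_0=0$, $q_1=1$, $q_{n+1}=a_nq_n+q_{n-1}$, and $p_0=1$, $p_1=0$, $p_{n+1}=a_np_n+p_{n-1}$. - $\Lambda_n=q_n\alpha-p_n$. - $\alpha_n^+=[a_n;a_{n+1},\ldots]$ and $\alpha_n^-=[0;a_{n-1},\ldots,a_1]=q_{n-1}/q_n$. - $c_n=1/(\alpha_n^++\alpha_n^-)$. Auxiliary quantities, for $t\in\{0,\ldots,q_n-1\}$: - $\xi_{nt}=\{tq_{n-1}/q_n\}-\frac12$; - $s_{nt}=2\sin\big(\pi[t/q_n-|\Lambda_n|\xi_{nt}]\big)$. $D_t(\beta)=\sum_{s=1}^t(\{\beta s\}-\frac12)$. The $O$-constant is independent of $n$. *)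

From Stdlib Require Import Reals List Arith.
Import ListNotations.
Open Scope R_scope.

(* sum_{t=m}^{n} f t  (empty, i.e. 0, when n < m) *)
Definition sumR (m n : nat) (f : nat -> R) : R :=
  fold_right Rplus 0 (map f (seq m (S n - m))).
(* prod_{t=m}^{n} f t  (empty, i.e. 1, when n < m) *)
Definition prodR (m n : nat) (f : nat -> R) : R :=
  fold_right Rmult 1 (map f (seq m (S n - m))).

Fixpoint gauss (alpha : R) (k : nat) : R :=
  match k with
  | O => alpha
  | S k' => frac_part (/ gauss alpha k')
  end.

(* continued fraction digits a_n (n >= 1): a_n = floor(1/x_{n-1}) *)
Definition cf_a (alpha : R) (n : nat) : nat :=
  Z.to_nat (Int_part (/ gauss alpha (pred n))).

Fixpoint cf_q (alpha : R) (n : nat) : nat :=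
  match n with
  | O => 0%nat
  | S m => match m with
           | O => 1%nat
           | S k => (cf_a alpha m * cf_q alpha m + cf_q alpha k)%nat
           end
  end.

Fixpoint cf_p (alpha : R) (n : nat) : nat :=
  match n with
  | O => 1%nat
  | S m => match m with
           | O => 0%nat
           | S k => (cf_a alpha m * cf_p alpha m + cf_p alpha k)%nat
           end
  end.

Definition Lambda (alpha : R) (n : nat) : R :=
  INR (cf_q alpha n) * alpha - INR (cf_p alpha n).

(* alpha_n^+ = [a_n; a_{n+1}, ...] = 1 / x_{n-1} *)
Definition alpha_plus (alpha : R) (n : nat) : R := / gauss alpha (pred n).

Definition alpha_minus (alpha : R) (n : nat) : R :=
  INR (cf_q alpha (pred n)) / INR (cf_q alpha n).

Definition c_n (alpha : R) (n : nat) : R :=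
  / (alpha_plus alpha n + alpha_minus alpha n).

Definition xi (alpha : R) (n t : nat) : R :=
  frac_part (INR t * INR (cf_q alpha (pred n)) / INR (cf_q alpha n)) - 1 / 2.

Definition s_nt (alpha : R) (n t : nat) : R :=
  2 * sin (PI * (INR t / INR (cf_q alpha n) - Rabs (Lambda alpha n) * xi alpha n t)).

Definition D (t : nat) (beta : R) : R :=
  sumR 1 t (fun s => frac_part (beta * INR s) - 1 / 2).

Definition B_n (alpha : R) (n : nat) : R :=
  Rabs (prodR 1 (cf_q alpha n - 1)
          (fun t => s_nt alpha n t / (2 * sin (PI * INR t / INR (cf_q alpha n))))).

Definition M_n (alpha : R) (n : nat) : nat := ((cf_q alpha n - 1) / 2)%nat.

Definition tau_n (alpha : R) (n : nat) : nat := Nat.sqrt (cf_q alpha n).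

(* Since |Λ_n| = c_n / q_n, every factor of B_n equals sin (θ (t - c_n ξ_t)) / sin (θ t) with
   θ = π / q_n.  As p_n q_{n-1} - p_{n-1} q_n = ±1, t q_{n-1} / q_n is never an integer, so ξ is odd
   under t ↦ q_n - t and log B_n is twice the sum of the logarithms of the factors over t ≤ M_n.
   For t ≤ τ_n a factor is (1 - c ξ_t / t) · sinc (θ (t - c ξ_t)) / sinc (θ t): expanding
   log (1 - x) to order τ_n leaves an error (1/2)^τ_n, the sinc terms cost O(θ² τ_n²), and
   -c ξ_t / t differs from -θ c ξ_t cot (θ t) by O(θ² t).  For τ_n < t ≤ M_n only that linear term
   survives, up to O(θ² + t^-2).  Summation by parts with cot a - cot b = sin (b - a) / (sin a sin b)
   turns the sum of ξ_t cot (θ t) into the sum of D_t / (sin (θ t) sin (θ (t + 1))); the boundary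
   term and the replacement of sin θ by θ are O(1/τ_n), and so is every error above after summing. *)

From Stdlib Require Import Reals Lra Lia Psatz List ZArith.
From Coquelicot Require Import Rcomplements Hierarchy Derive AutoDerive.
Open Scope R_scope.

Fixpoint sum_to (n : nat) (f : nat -> R) : R :=
  match n with O => 0 | S k => sum_to k f + f (S k) end.

Fixpoint prod_to (n : nat) (f : nat -> R) : R :=
  match n with O => 1 | S k => prod_to k f * f (S k) end.

Lemma fold_right_Rplus_acc l a : fold_right Rplus a l = fold_right Rplus 0 l + a.
Proof. induction l as [|x l IH]; simpl; [lra | rewrite IH; lra]. Qed.

Lemma fold_right_Rmult_acc l a : fold_right Rmult a l = fold_right Rmult 1 l * a.
Proof. induction l as [|x l IH]; simpl; [lra | rewrite IH; lra]. Qed.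

Lemma sumR_1_sum_to n f : sumR 1 n f = sum_to n f.
Proof.
  unfold sumR. replace (S n - 1)%nat with n by lia.
  induction n as [|n IH]; [reflexivity|].
  rewrite seq_S, map_app, fold_right_app; simpl.
  rewrite fold_right_Rplus_acc, IH. replace (1 + n)%nat with (S n) by lia. lra.
Qed.

Lemma prodR_1_prod_to n f : prodR 1 n f = prod_to n f.
Proof.
  unfold prodR. replace (S n - 1)%nat with n by lia.
  induction n as [|n IH]; [reflexivity|].
  rewrite seq_S, map_app, fold_right_app; simpl.
  rewrite fold_right_Rmult_acc, IH. replace (1 + n)%nat with (S n) by lia. lra.
Qed.

Lemma sumR_2_sum_to n f : (1 <= n)%nat -> sumR 2 n f = sum_to n f - f 1%nat.
Proof.
  intros Hn. rewrite <- sumR_1_sum_to. unfold sumR.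
  destruct n as [|n]; [lia|].
  replace (S (S n) - 1)%nat with (S n) by lia.
  replace (S (S n) - 2)%nat with n by lia. simpl. lra.
Qed.

Lemma sum_to_ext n f g :
  (forall t, (1 <= t <= n)%nat -> f t = g t) -> sum_to n f = sum_to n g.
Proof.
  induction n as [|n IH]; intros H; simpl; [lra|].
  rewrite IH, H; [lra | lia | intros; apply H; lia].
Qed.

Lemma prod_to_ext n f g :
  (forall t, (1 <= t <= n)%nat -> f t = g t) -> prod_to n f = prod_to n g.
Proof.
  induction n as [|n IH]; intros H; simpl; [lra|].
  rewrite IH, H; [lra | lia | intros; apply H; lia].
Qed.

Lemma sum_to_add n f g : sum_to n (fun t => f t + g t) = sum_to n f + sum_to n g.
Proof. induction n as [|n IH]; simpl; [lra | rewrite IH; lra]. Qed.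

Lemma sum_to_sub n f g : sum_to n (fun t => f t - g t) = sum_to n f - sum_to n g.
Proof. induction n as [|n IH]; simpl; [lra | rewrite IH; lra]. Qed.

Lemma sum_to_scal n a f : sum_to n (fun t => a * f t) = a * sum_to n f.
Proof. induction n as [|n IH]; simpl; [lra | rewrite IH; lra]. Qed.

Lemma sum_to_const n a : sum_to n (fun _ => a) = INR n * a.
Proof. induction n as [|n IH]; simpl; [lra | rewrite IH; destruct n; simpl; lra]. Qed.

Lemma Rabs_sum_to_le n f g :
  (forall t, (1 <= t <= n)%nat -> Rabs (f t) <= g t) -> Rabs (sum_to n f) <= sum_to n g.
Proof.
  induction n as [|n IH]; intros H; simpl; [rewrite Rabs_R0; lra|].
  eapply Rle_trans; [apply Rabs_triang|].
  assert (Rabs (sum_to n f) <= sum_to n g) by (apply IH; intros; apply H; lia).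
  specialize (H (S n) ltac:(lia)). lra.
Qed.

Lemma sum_to_split a b f :
  sum_to (a + b) f = sum_to a f + sum_to b (fun t => f (a + t)%nat).
Proof.
  induction b as [|b IH]; simpl; [rewrite Nat.add_0_r; lra|].
  rewrite Nat.add_succ_r; simpl. rewrite IH. lra.
Qed.

Lemma sum_to_shift n f : sum_to (S n) f = f 1%nat + sum_to n (fun t => f (S t)).
Proof. induction n as [|n IH]; simpl in *; [lra | rewrite IH; lra]. Qed.

Lemma sum_to_rev n f : sum_to n (fun t => f (S n - t)%nat) = sum_to n f.
Proof.
  revert f; induction n as [|n IH]; intros f; [reflexivity|].
  cbn [sum_to].
  rewrite (sum_to_ext n _ (fun t => f (S (S n - t)))) by
    (intros t Ht; f_equal; lia).
  rewrite (IH (fun s => f (S s))).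
  replace (S (S n) - S n)%nat with 1%nat by lia.
  pose proof (sum_to_shift n f) as E; cbn [sum_to] in E. lra.
Qed.

Lemma ln_prod_to n f : (forall t, (1 <= t <= n)%nat -> 0 < f t) ->
  0 < prod_to n f /\ ln (prod_to n f) = sum_to n (fun t => ln (f t)).
Proof.
  induction n as [|n IH]; intros H; simpl; [split; [lra | apply ln_1]|].
  destruct IH as [Hpos Hln]; [intros; apply H; lia|].
  assert (0 < f (S n)) by (apply H; lia).
  split; [nra|]. rewrite ln_mult, Hln; auto.
Qed.

Lemma sum_to_by_parts m x g :
  sum_to (S m) (fun t => x t * g t)
  = sum_to (S m) x * g (S m) + sum_to m (fun t => sum_to t x * (g t - g (S t))).
Proof. induction m as [|m IH]; cbn [sum_to] in *; [lra | rewrite IH; lra]. Qed.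

Lemma sum_to_inv_sq_le a k : (1 <= a)%nat ->
  sum_to k (fun i => / INR (a + i) ^ 2) <= / INR a - / INR (a + k).
Proof.
  intros Ha. assert (1 <= INR a) by (apply (le_INR 1); auto).
  induction k as [|k IH]; cbn [sum_to]; [rewrite Nat.add_0_r; lra|].
  rewrite Nat.add_succ_r, S_INR.
  assert (INR (a + k) >= INR a) by (rewrite plus_INR; pose proof (pos_INR k); lra).
  set (x := INR (a + k)) in *.
  assert (/ (x + 1) ^ 2 <= / x - / (x + 1)).
  { replace (/ x - / (x + 1)) with (/ (x * (x + 1))) by (field; lra).
    apply Rinv_le_contravar; nra. }
  lra.
Qed.

Lemma sum_to_fold_sym (q : nat) (L : nat -> R) : (2 <= q)%nat ->
  (forall t, (1 <= t <= q - 1)%nat -> L (q - t)%nat = L t) ->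
  (forall t, (2 * t = q)%nat -> L t = 0) ->
  sum_to (q - 1) L = 2 * sum_to ((q - 1) / 2) L.
Proof.
  intros Hq Hsym Hmid.
  set (M := ((q - 1) / 2)%nat). set (K := (q - 1 - M)%nat).
  assert (HM : (2 * M <= q - 1 <= 2 * M + 1)%nat).
  { pose proof (Nat.div_mod (q - 1) 2 ltac:(lia)).
    pose proof (Nat.mod_upper_bound (q - 1) 2 ltac:(lia)). unfold M. lia. }
  replace (q - 1)%nat with (M + K)%nat at 1 by (unfold K; lia).
  rewrite sum_to_split, <- (sum_to_rev K (fun t => L (M + t)%nat)).
  rewrite (sum_to_ext K _ L) by
    (intros t Ht; rewrite <- Hsym by (unfold K in *; lia); f_equal; unfold K in *; lia).
  assert (K = M \/ K = S M)%nat as [E|E] by (unfold K; lia); rewrite E; [lra|].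
  cbn [sum_to]. rewrite (Hmid (S M)) by (unfold K in *; lia). lra.
Qed.

Lemma INR_fact_S n : INR (fact (S n)) = INR (S n) * INR (fact n).
Proof. rewrite fact_simpl, mult_INR. reflexivity. Qed.

Lemma sin_lb_eq x : sin_lb x = x - x^3/6 + x^5/120 - x^7/5040.
Proof.
  unfold sin_lb, sin_approx, sin_term. cbn [sum_f_R0 Nat.mul Nat.add].
  rewrite !INR_fact_S. simpl INR. field.
Qed.

Lemma sin_ub_eq x : sin_ub x = x - x^3/6 + x^5/120 - x^7/5040 + x^9/362880.
Proof.
  unfold sin_ub, sin_approx, sin_term. cbn [sum_f_R0 Nat.mul Nat.add].
  rewrite !INR_fact_S. simpl INR. field.
Qed.

Lemma cos_ub_eq x : cos_ub x = 1 - x^2/2 + x^4/24 - x^6/720 + x^8/40320.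
Proof.
  unfold cos_ub, cos_approx, cos_term. cbn [sum_f_R0 Nat.mul Nat.add].
  rewrite !INR_fact_S. simpl INR. simpl fact. simpl INR. field.
Qed.

Lemma PI_bounds : 3 < PI <= 16/5.
Proof.
  pose proof PI2_3_2. split; [lra|].
  destruct (Rle_lt_dec PI (16/5)) as [h|h]; [exact h | exfalso].
  destruct (COS (8/5) ltac:(lra) ltac:(lra)) as [_ Hub]. rewrite cos_ub_eq in Hub.
  assert (0 <= cos (8/5)) by (apply cos_ge_0; lra). lra.
Qed.

Lemma sin_le_id x : 0 <= x -> sin x <= x.
Proof.
  intros Hx. destruct (Rle_lt_dec x 1); [|pose proof (SIN_bound x); lra].
  pose proof PI_bounds. destruct (SIN x Hx ltac:(lra)) as [_ Hub].
  rewrite sin_ub_eq in Hub.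
  assert (x^2 <= 1) by nra.
  assert (0 <= x^3) by (apply pow_le; lra). assert (0 <= x^7) by (apply pow_le; lra).
  assert (x^9 <= x^7) by (replace (x^9) with (x^7 * x^2) by ring; nra).
  assert (x^5 <= x^3) by (replace (x^5) with (x^3 * x^2) by ring; nra). lra.
Qed.

Lemma sin_ge_cubic x : 0 <= x <= PI -> x - x^3/6 <= sin x.
Proof.
  intros Hx. pose proof PI_bounds. destruct (SIN x ltac:(lra) ltac:(lra)) as [Hlb _].
  rewrite sin_lb_eq in Hlb.
  assert (0 <= x^5) by (apply pow_le; lra). assert (x^2 <= 16) by nra.
  assert (x^7 <= 16 * x^5) by (replace (x^7) with (x^5 * x^2) by ring; nra). lra.
Qed.

Lemma sin_ge_half x : 0 <= x <= 17/10 -> x / 2 <= sin x.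
Proof.
  intros Hx. pose proof PI_bounds. pose proof (sin_ge_cubic x ltac:(lra)).
  assert (x^2 <= 3) by nra. assert (x^3 <= 3 * x) by (replace (x^3) with (x * x^2) by ring; nra). lra.
Qed.

Lemma Rabs_sin_le x : Rabs (sin x) <= Rabs x.
Proof.
  pose proof PI_bounds.
  assert (Hpos : forall y, 0 <= y -> Rabs (sin y) <= y).
  { intros y Hy. apply Rabs_le. pose proof (sin_le_id y Hy).
    destruct (Rle_lt_dec y PI); [pose proof (sin_ge_0 y Hy r) | pose proof (SIN_bound y)]; lra. }
  destruct (Rle_lt_dec 0 x) as [Hx|Hx].
  - rewrite (Rabs_pos_eq x Hx). auto.
  - rewrite <- Rabs_Ropp, <- sin_neg, (Rabs_left x Hx). apply Hpos. lra.
Qed.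

Lemma Rabs_1_sub_cos x : Rabs (1 - cos x) <= x^2 / 2.
Proof.
  assert (E : cos x = 1 - 2 * sin (x/2) ^ 2).
  { replace x with (2 * (x/2)) at 1 by field. rewrite cos_2a_sin. ring. }
  assert (sin (x/2) ^ 2 <= (x/2) ^ 2).
  { rewrite <- (pow2_abs (sin _)), <- (pow2_abs (x/2)).
    apply pow_incr. split; [apply Rabs_pos | apply Rabs_sin_le]. }
  rewrite E. apply Rabs_le. split; [nra|]. assert (0 <= sin (x/2) ^ 2) by nra. lra.
Qed.

Lemma Rabs_sin_sub_id x : Rabs x <= PI -> Rabs (sin x - x) <= Rabs x ^ 3 / 6.
Proof.
  intros Hx.
  assert (Hpos : forall y, 0 <= y <= PI -> Rabs (sin y - y) <= y ^ 3 / 6).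
  { intros y Hy. pose proof (sin_le_id y ltac:(lra)). pose proof (sin_ge_cubic y Hy).
    apply Rabs_le. lra. }
  destruct (Rle_lt_dec 0 x) as [h|h].
  - rewrite (Rabs_pos_eq x h) in *. apply Hpos. lra.
  - rewrite (Rabs_left x h) in *. rewrite <- Rabs_Ropp.
    replace (- (sin x - x)) with (sin (- x) - - x) by (rewrite sin_neg; ring).
    apply Hpos. lra.
Qed.

Lemma is_derive_sum_pow_div m y :
  is_derive (fun z => sum_to m (fun j => z ^ j / INR j)) y (sum_to m (fun j => y ^ pred j)).
Proof.
  induction m as [|m IH]; simpl; [auto_derive; auto|].
  apply (is_derive_plus (fun z => sum_to m (fun j => z ^ j / INR j))); [exact IH|].
  assert (INR (S m) <> 0) by (apply not_0_INR; lia).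
  auto_derive; auto.
  replace (y * (1 * (INR m * y ^ pred m))) with (INR m * y ^ m) by (destruct m; simpl; ring).
  change (match m with O => 1 | S _ => INR m + 1 end) with (INR (S m)).
  rewrite S_INR in *. field. exact H.
Qed.

Lemma geom_sum_mul m y : sum_to m (fun j => y ^ pred j) * (1 - y) = 1 - y ^ m.
Proof.
  induction m as [|m IH]; simpl; [ring|].
  rewrite Rmult_plus_distr_r, IH. destruct m; simpl; ring.
Qed.

Lemma is_derive_ln_taylor m z : z < 1 ->
  is_derive (fun z => ln (1 - z) + sum_to m (fun j => z ^ j / INR j)) z (- z ^ m / (1 - z)).
Proof.
  intros Hz.
  replace (- z ^ m / (1 - z)) with (- / (1 - z) + sum_to m (fun j => z ^ pred j)).
  2:{ apply (Rmult_eq_reg_r (1 - z)); [|lra].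
      rewrite Rmult_plus_distr_r, geom_sum_mul. field. lra. }
  apply (is_derive_plus (fun z => ln (1 - z))); [|apply is_derive_sum_pow_div].
  auto_derive; [lra | field; lra].
Qed.

Lemma ln_taylor_remainder m x : Rabs x <= 1/2 ->
  Rabs (ln (1 - x) + sum_to m (fun j => x ^ j / INR j)) <= 2 * Rabs x ^ S m.
Proof.
  intros Hx. pose proof (proj1 (Rabs_le_between x _) Hx).
  set (F := fun z => ln (1 - z) + sum_to m (fun j => z ^ j / INR j)).
  assert (F0 : F 0 = 0).
  { unfold F. rewrite Rminus_0_r, ln_1, Rplus_0_l.
    rewrite (sum_to_ext m _ (fun _ => 0)), sum_to_const; [ring|].
    intros j Hj. destruct j; [lia | simpl; lra]. }
  destruct (MVT_abs F (fun z => - z ^ m / (1 - z)) 0 x) as [z [Hmvt Hz]].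
  { intros z Hz. apply is_derive_Reals, is_derive_ln_taylor.
    unfold Rmin, Rmax in Hz. destruct (Rle_dec 0 x); lra. }
  assert (Hzx : Rabs z <= Rabs x).
  { unfold Rmin, Rmax in Hz. destruct (Rle_dec 0 x); [rewrite !Rabs_pos_eq | rewrite !Rabs_left1]; lra. }
  pose proof (proj1 (Rabs_le_between z (1/2)) ltac:(lra)).
  assert (Hderiv : Rabs (- z ^ m / (1 - z)) <= 2 * Rabs x ^ m).
  { rewrite Rabs_div, Rabs_Ropp, <- RPow_abs, (Rabs_pos_eq (1 - z)) by lra.
    apply Rle_div_l; [lra|].
    assert (Rabs z ^ m <= Rabs x ^ m) by (apply pow_incr; split; [apply Rabs_pos | lra]).
    assert (0 <= Rabs x ^ m) by (apply pow_le, Rabs_pos). nra. }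
  change (Rabs (F x) <= 2 * Rabs x ^ S m).
  replace (F x) with (F x - F 0) by (rewrite F0; ring).
  rewrite Hmvt, Rminus_0_r. simpl pow.
  pose proof (Rabs_pos x). pose proof (Rabs_pos (- z ^ m / (1 - z))). nra.
Qed.

Lemma Rabs_ln_1_add_sub y : Rabs y <= 1/2 -> Rabs (ln (1 + y) - y) <= 2 * y ^ 2.
Proof.
  intros Hy. pose proof (ln_taylor_remainder 1 (- y)) as E.
  rewrite Rabs_Ropp in E. specialize (E Hy). cbn [sum_to] in E.
  replace (1 - - y) with (1 + y) in E by ring.
  replace (ln (1 + y) + (0 + (- y) ^ 1 / INR 1)) with (ln (1 + y) - y) in E by (simpl; field).
  rewrite pow2_abs in E. exact E.
Qed.

Lemma Rabs_ln_sinc z : 0 < z <= 1 -> Rabs (ln (sin z / z)) <= z ^ 2 / 3.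
Proof.
  intros Hz. pose proof PI_bounds.
  pose proof (sin_le_id z ltac:(lra)). pose proof (sin_ge_cubic z ltac:(lra)).
  set (y := sin z / z - 1).
  assert (Hy : - (z ^ 2 / 6) <= y <= 0).
  { unfold y. assert (1 - z^2/6 <= sin z / z <= 1); [|lra].
    split; [apply Rle_div_r | apply Rle_div_l]; nra. }
  replace (sin z / z) with (1 + y) by (unfold y; ring).
  assert (z ^ 2 <= 1) by nra.
  pose proof (Rabs_ln_1_add_sub y ltac:(apply Rabs_le; lra)) as Hln.
  apply Rabs_le_between in Hln. apply Rabs_le. nra.
Qed.

Definition cot (x : R) : R := cos x / sin x.

Lemma cot_bounds x : 0 < x <= PI / 2 -> 0 <= cot x <= 2 / x.
Proof.
  intros Hx. pose proof PI_bounds. pose proof (sin_ge_half x ltac:(lra)).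
  pose proof (cos_ge_0 x ltac:(lra) ltac:(lra)). pose proof (COS_bound x).
  unfold cot. split; [apply Rdiv_le_0_compat; lra|].
  replace (2 / x) with (1 / (x / 2)) by (field; lra). unfold Rdiv.
  apply Rmult_le_compat; [lra | left; apply Rinv_0_lt_compat | | apply Rinv_le_contravar]; lra.
Qed.

Lemma Rabs_inv_sub_cot x : 0 < x <= 1 -> Rabs (/ x - cot x) <= x.
Proof.
  intros Hx. pose proof PI_bounds. pose proof (sin_ge_half x ltac:(lra)).
  pose proof (sin_le_id x ltac:(lra)). pose proof (sin_ge_cubic x ltac:(lra)).
  pose proof (Rabs_1_sub_cos x) as Hc. apply Rabs_le_between in Hc.
  unfold cot.
  replace (/ x - cos x / sin x) with ((sin x - x * cos x) / (x * sin x)) by (field; lra).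
  rewrite Rabs_div, (Rabs_pos_eq (x * sin x)) by nra.
  apply Rle_div_l; [apply Rmult_lt_0_compat; lra|].
  assert (x^3 / 2 <= x * (x * sin x)) by (replace (x^3) with (x * (x * x)) by ring; nra).
  assert (0 <= x * (1 - cos x) <= x * (x^2 / 2)).
  { pose proof (COS_bound x). split; [|apply Rmult_le_compat_l]; nra. }
  assert (0 <= x^3) by (apply pow_le; lra).
  apply Rabs_le. split; nra.
Qed.

Lemma Rabs_cot_mul_sub_div (th u T : R) :
  0 < T -> 0 < th * T <= 1 -> Rabs u <= 1/2 ->
  Rabs (th * u * cot (th * T) - u / T) <= th ^ 2 * T / 2.
Proof.
  intros HT HthT Hu. assert (0 < th) by nra.
  assert (0 < sin (th * T)) by (pose proof PI_bounds; apply sin_gt_0; lra).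
  replace (th * u * cot (th * T) - u / T) with (- (u * th) * (/ (th * T) - cot (th * T)))
    by (unfold cot; field; lra).
  rewrite Rabs_mult, Rabs_Ropp, Rabs_mult, (Rabs_pos_eq th) by lra.
  pose proof (Rabs_inv_sub_cot (th * T) HthT).
  assert (Rabs u * th * Rabs (/ (th * T) - cot (th * T)) <= 1/2 * th * (th * T))
    by (apply Rmult_le_compat; try apply Rmult_le_pos; try apply Rabs_pos; nra).
  lra.
Qed.

Lemma ln_sin_ratio_small_t (th u : R) (t tau : nat) :
  0 < th -> Rabs u <= 1/2 -> (1 <= t <= tau)%nat -> th * (INR tau + 1) <= 1 ->
  Rabs (ln (sin (th * (INR t - u)) / sin (th * INR t))
        - (- th * u * cot (th * INR t)
           - (sum_to tau (fun j => (u / INR t) ^ j / INR j) - u / INR t)))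
  <= (1/2) ^ tau + 2 * th ^ 2 * (INR tau + 1) ^ 2.
Proof.
  intros Hth Hu Ht Htau. pose proof PI_bounds.
  assert (HT : 1 <= INR t <= INR tau) by (split; [apply (le_INR 1) | apply le_INR]; lia).
  pose proof (proj1 (Rabs_le_between u _) Hu).
  set (T := INR t) in *. set (a := th * (T - u)). set (b := th * T). set (x := u / T).
  assert (Ha : 0 < a <= th * (INR tau + 1)) by (unfold a; split; nra).
  assert (Hb : 0 < b <= th * (INR tau + 1)) by (unfold b; split; nra).
  assert (0 < sin a /\ 0 < sin b) as [] by (split; apply sin_gt_0; lra).
  assert (Hx : Rabs x <= 1/2).
  { unfold x. rewrite Rabs_div, (Rabs_pos_eq T) by lra. apply Rle_div_l; lra. }
  assert (Hfactor : sin a / sin b = (1 - x) * ((sin a / a) / (sin b / b))).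
  { unfold x, a, b in *. field. repeat split; try lra; nra. }
  rewrite Hfactor, ln_mult, ln_div by (repeat apply Rdiv_lt_0_compat; apply Rabs_le_between in Hx; lra).
  assert (Hlog : 2 * Rabs x ^ S tau <= (1/2) ^ tau).
  { assert (Rabs x ^ tau <= (1/2) ^ tau) by (apply pow_incr; split; [apply Rabs_pos | lra]).
    assert (0 <= Rabs x ^ tau) by (apply pow_le, Rabs_pos). simpl. nra. }
  pose proof (ln_taylor_remainder tau x Hx) as Hseries.
  pose proof (Rabs_cot_mul_sub_div th u T ltac:(lra) ltac:(fold b; lra) Hu) as Hcot.
  pose proof (Rabs_ln_sinc a ltac:(lra)) as Hsinc_a. pose proof (Rabs_ln_sinc b ltac:(lra)) as Hsinc_b.
  assert (a ^ 2 <= th ^ 2 * (INR tau + 1) ^ 2 /\ b ^ 2 <= th ^ 2 * (INR tau + 1) ^ 2) as []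
    by (rewrite <- Rpow_mult_distr; split; apply pow_incr; lra).
  assert (th ^ 2 * T <= th ^ 2 * (INR tau + 1) ^ 2) by (apply Rmult_le_compat_l; nra).
  apply Rabs_le_between in Hseries, Hcot, Hsinc_a, Hsinc_b.
  fold b x in Hcot. apply Rabs_le. lra.
Qed.

Lemma sin_sub_div_sin b v : sin b <> 0 -> sin (b - v) / sin b = cos v - sin v * cot b.
Proof. intros Hb. rewrite sin_minus. unfold cot. field. exact Hb. Qed.

Lemma cos_sub_sin_mul_bounds v k : 0 <= k -> Rabs v <= PI ->
  Rabs (cos v - 1 - sin v * k) <= v ^ 2 / 2 + Rabs v * k /\
  Rabs (cos v - 1 - sin v * k + v * k) <= v ^ 2 / 2 + v ^ 2 / 6 * (Rabs v * k).
Proof.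
  intros Hk Hv.
  pose proof (Rabs_1_sub_cos v) as Hcos. apply Rabs_le_between in Hcos.
  assert (Hsin : Rabs (sin v * k) <= Rabs v * k).
  { rewrite Rabs_mult, (Rabs_pos_eq k) by lra. apply Rmult_le_compat_r; [lra | apply Rabs_sin_le]. }
  assert (Hsin3 : Rabs ((sin v - v) * k) <= v ^ 2 / 6 * (Rabs v * k)).
  { rewrite Rabs_mult, (Rabs_pos_eq k) by lra.
    replace (v ^ 2 / 6 * (Rabs v * k)) with (Rabs v ^ 3 / 6 * k) by (rewrite <- (pow2_abs v); field).
    apply Rmult_le_compat_r; [lra | apply Rabs_sin_sub_id, Hv]. }
  apply Rabs_le_between in Hsin, Hsin3.
  split; apply Rabs_le; lra.
Qed.

Lemma ln_sin_ratio_large_t (th u T : R) :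
  0 < th <= 1/25 -> Rabs u <= 1/2 -> 11 <= T -> th * T <= PI / 2 ->
  Rabs (ln (sin (th * (T - u)) / sin (th * T)) + th * u * cot (th * T))
  <= th ^ 2 + 4 / T ^ 2.
Proof.
  intros Hth Hu HT HthT. pose proof PI_bounds.
  set (b := th * T) in *. set (v := th * u).
  assert (0 < b) by (unfold b; nra).
  assert (0 < sin b) by (apply sin_gt_0; lra).
  pose proof (cot_bounds b ltac:(lra)) as Hk.
  assert (Hv : Rabs v <= th / 2) by (unfold v; rewrite Rabs_mult, Rabs_pos_eq by lra; nra).
  assert (Hw : Rabs v * cot b <= 1 / T).
  { apply (Rle_trans _ (th / 2 * (2 / b))); [apply Rmult_le_compat; try apply Rabs_pos; lra |].
    unfold b. apply Req_le. field. lra. }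
  replace (th * (T - u)) with (b - v) by (unfold b, v; ring).
  rewrite sin_sub_div_sin by lra.
  destruct (cos_sub_sin_mul_bounds v (cot b) ltac:(lra) ltac:(lra)) as [Hy Hyz].
  set (y := cos v - 1 - sin v * cot b) in *.
  replace (cos v - sin v * cot b) with (1 + y) by (unfold y; ring).
  assert (Hv2 : v ^ 2 <= th ^ 2 / 4).
  { rewrite <- pow2_abs. replace (th ^ 2 / 4) with ((th / 2) ^ 2) by field.
    apply pow_incr. split; [apply Rabs_pos | lra]. }
  assert (0 < 1 / T <= 1 / 11)
    by (split; [apply Rdiv_lt_0_compat | apply Rmult_le_compat_l, Rinv_le_contravar]; lra).
  assert (0 <= Rabs v * cot b) by (apply Rmult_le_pos; [apply Rabs_pos | lra]).
  assert (v ^ 2 / 6 * (Rabs v * cot b) <= th ^ 2 / 24 * (1 / 11))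
    by (apply Rmult_le_compat; try apply Rdiv_le_0_compat; try apply pow2_ge_0; lra).
  assert (Hy_le : Rabs y <= th ^ 2 / 8 + 1 / T) by lra.
  assert (th ^ 2 <= 1 / 625) by nra.
  pose proof (Rabs_ln_1_add_sub y ltac:(lra)) as Hln.
  assert (Hy2 : y ^ 2 <= th ^ 4 / 32 + 2 * (1 / T) ^ 2).
  { rewrite <- pow2_abs. pose proof (Rabs_pos y).
    assert (Rabs y ^ 2 <= (th ^ 2 / 8 + 1 / T) ^ 2) by (apply pow_incr; lra).
    pose proof (pow2_ge_0 (th ^ 2 / 8 - 1 / T)). nra. }
  replace (ln (1 + y) + v * cot b) with ((ln (1 + y) - y) + (y + v * cot b)) by ring.
  replace (4 / T ^ 2) with (4 * (1 / T) ^ 2) by (field; lra).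
  assert (th ^ 4 <= th ^ 2) by (simpl; nra).
  apply Rabs_le_between in Hln, Hyz. apply Rabs_le. nra.
Qed.

Lemma INR_sq_le_pow2 k : INR k ^ 2 <= 2 * 2 ^ k.
Proof.
  assert (Hlin : forall k, 2 * INR k + 1 <= 2 * 2 ^ k).
  { induction k0 as [|k0 IH]; [simpl; lra|].
    rewrite S_INR. change (2 ^ S k0) with (2 * 2 ^ k0). pose proof (pow_R1_Rle 2 k0 ltac:(lra)). lra. }
  induction k as [|k IH]; [simpl; lra|].
  rewrite S_INR. change (2 ^ S k) with (2 * 2 ^ k). specialize (Hlin k). nra.
Qed.

Lemma sum_to_mul_cot m th x :
  (forall t, (1 <= t <= S m)%nat -> 0 < sin (th * INR t)) ->
  sum_to (S m) (fun t => x t * cot (th * INR t))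
  = sum_to (S m) x * cot (th * INR (S m))
    + sin th * sum_to m (fun t => sum_to t x / (sin (th * INR t) * sin (th * INR (S t)))).
Proof.
  intros Hsin. rewrite sum_to_by_parts, <- sum_to_scal. f_equal.
  apply sum_to_ext. intros t Ht.
  pose proof (Hsin t ltac:(lia)). pose proof (Hsin (S t) ltac:(lia)).
  replace (sin th) with (sin (th * INR (S t) - th * INR t)) by (f_equal; rewrite S_INR; ring).
  rewrite sin_minus. unfold cot. field. lra.
Qed.

Lemma Rdiv_le_cross a b c d : 0 < b -> 0 < d -> a * d <= c * b -> a / b <= c / d.
Proof.
  intros Hb Hd H. apply (Rmult_le_reg_r (b * d)); [nra|].
  replace (a / b * (b * d)) with (a * d) by (field; lra).
  replace (c / d * (b * d)) with (c * b) by (field; lra). lra.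
Qed.

(* [q], [c] and [xi] stand for q_n, c_n and t ↦ ξ_{nt}; the continued fraction enters only
   through the hypotheses below. *)
Section LogSineProduct.

Variables (q : nat) (c : R) (xi : nat -> R).
Hypothesis q_large : (100 <= q)%nat.
Hypothesis c_bounds : 0 <= c <= 1.
Hypothesis xi_bound : forall t, Rabs (xi t) <= 1/2.
Hypothesis xi_odd : forall t, (1 <= t <= q - 1)%nat -> xi (q - t)%nat = - xi t.

Let th := PI / INR q.
Let tau := Nat.sqrt q.
Let M := ((q - 1) / 2)%nat.

Lemma INR_q_ge_100 : 100 <= INR q.
Proof. replace 100 with (INR 100) by (rewrite INR_IZR_INZ; reflexivity). apply le_INR; lia. Qed.

Lemma th_mul_q : th * INR q = PI.
Proof. pose proof INR_q_ge_100. unfold th. field. lra. Qed.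

Lemma th_bounds : 0 < th <= 1/25.
Proof.
  pose proof INR_q_ge_100. pose proof PI_bounds. unfold th.
  split; [apply Rdiv_lt_0_compat; lra | apply Rle_div_l; lra].
Qed.

Lemma M_bounds : (2 * M <= q - 1 <= 2 * M + 1)%nat.
Proof.
  pose proof (Nat.div_mod (q - 1) 2 ltac:(lia)).
  pose proof (Nat.mod_upper_bound (q - 1) 2 ltac:(lia)). unfold M. lia.
Qed.

Lemma INR_M_bounds : INR q - 2 <= 2 * INR M <= INR q - 1.
Proof.
  pose proof M_bounds.
  assert (INR (2 * M) <= INR (q - 1) <= INR (2 * M + 1)) by (split; apply le_INR; lia).
  rewrite minus_INR, plus_INR, mult_INR in * by lia. simpl in *. lra.
Qed.

Lemma tau_bounds : (10 <= tau <= M)%nat /\ (tau * tau <= q < S tau * S tau)%nat.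
Proof.
  pose proof M_bounds. unfold tau. pose proof (Nat.sqrt_spec q ltac:(lia)). nia.
Qed.

Lemma INR_tau_bounds :
  10 <= INR tau /\ INR tau * INR tau <= INR q < (INR tau + 1) * (INR tau + 1).
Proof.
  destruct tau_bounds as [? [? ?]].
  rewrite <- S_INR, <- !mult_INR. split; [|split; [apply le_INR | apply lt_INR]; lia].
  replace 10 with (INR 10) by (simpl; lra). apply le_INR. lia.
Qed.

Lemma th_tau_le_1 : th * (INR tau + 1) <= 1.
Proof.
  pose proof PI_bounds. pose proof INR_q_ge_100. destruct INR_tau_bounds as [? [? ?]].
  unfold th. replace (PI / INR q * (INR tau + 1)) with (PI * (INR tau + 1) / INR q) by (field; lra).
  apply Rle_div_l; nra.
Qed.

Lemma th_sq_q_le : th ^ 2 * INR q <= 2 / INR tau.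
Proof.
  pose proof PI_bounds. pose proof INR_q_ge_100. destruct INR_tau_bounds as [? [? ?]].
  replace (th ^ 2 * INR q) with (PI ^ 2 / INR q) by (unfold th; field; lra).
  apply Rdiv_le_cross; [lra | lra |].
  assert (PI ^ 2 <= 11) by nra.
  assert (PI ^ 2 * INR tau <= 11 * INR tau) by (apply Rmult_le_compat_r; lra). nra.
Qed.

Lemma th_M_bounds : PI / 2 - th <= th * INR M <= PI / 2.
Proof.
  pose proof INR_M_bounds. pose proof th_bounds. pose proof th_mul_q.
  assert (2 * (th * INR M) <= th * (INR q - 1) /\ th * (INR q - 2) <= 2 * (th * INR M)) as []
    by (split; rewrite <- Rmult_assoc, (Rmult_comm 2), Rmult_assoc; apply Rmult_le_compat_l; lra).
  lra.
Qed.

Lemma Rabs_c_xi_le t : Rabs (c * xi t) <= 1/2.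
Proof.
  rewrite Rabs_mult, (Rabs_pos_eq c) by lra.
  pose proof (xi_bound t). pose proof (Rabs_pos (xi t)). nra.
Qed.

Lemma sin_th_pos (x : R) : 0 < x < INR q -> 0 < sin (th * x).
Proof.
  intros Hx. pose proof INR_q_ge_100. pose proof th_bounds. pose proof th_mul_q.
  apply sin_gt_0; nra.
Qed.

Let log_ratio t := ln (sin (th * (INR t - c * xi t)) / sin (th * INR t)).
Let cot_term t := - th * (c * xi t) * cot (th * INR t).
Let log_tail t := sum_to tau (fun j => (c * xi t / INR t) ^ j / INR j) - c * xi t / INR t.
Let D_sum := sum_to (M - 1) (fun t => sum_to t xi / (sin (th * INR t) * sin (th * INR (S t)))).

Lemma ln_abs_prod_fold :
  ln (Rabs (prod_to (q - 1) (fun t => sin (th * (INR t - c * xi t)) / sin (th * INR t))))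
  = 2 * sum_to M log_ratio.
Proof.
  pose proof INR_q_ge_100. pose proof th_mul_q.
  assert (Ht : forall t, (1 <= t <= q - 1)%nat -> 1 <= INR t <= INR q - 1).
  { intros t Ht. assert (1 <= INR t <= INR (q - 1)) by (split; [apply (le_INR 1) | apply le_INR]; lia).
    rewrite minus_INR in * by lia. simpl INR in *. lra. }
  destruct (ln_prod_to (q - 1) (fun t => sin (th * (INR t - c * xi t)) / sin (th * INR t)))
    as [Hpos Hln].
  { intros t Hrange. specialize (Ht t Hrange). pose proof (Rabs_c_xi_le t) as Hu.
    apply Rabs_le_between in Hu. apply Rdiv_lt_0_compat; apply sin_th_pos; lra. }
  rewrite Rabs_pos_eq, Hln by lra.
  apply (sum_to_fold_sym q log_ratio ltac:(lia)).
  - intros t Hrange. unfold log_ratio. rewrite xi_odd, minus_INR by lia.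
    replace (th * (INR q - INR t - c * - xi t)) with (PI - th * (INR t - c * xi t)) by lra.
    replace (th * (INR q - INR t)) with (PI - th * INR t) by lra.
    rewrite !sin_PI_x. reflexivity.
  - intros t Hmid.
    assert (xi t = 0) as Hzero.
    { pose proof (xi_odd t ltac:(lia)) as Hodd. replace (q - t)%nat with t in Hodd by lia. lra. }
    unfold log_ratio. rewrite Hzero, Rmult_0_r, Rminus_0_r.
    assert (0 < sin (th * INR t)) by (apply sin_th_pos; specialize (Ht t ltac:(lia)); lra).
    unfold Rdiv. rewrite Rinv_r by lra. apply ln_1.
Qed.

Lemma sum_cot_term_by_parts :
  sum_to M cot_term = - th * c * (sum_to M xi * cot (th * INR M) + sin th * D_sum).
Proof.
  pose proof M_bounds. pose proof INR_M_bounds.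
  rewrite (sum_to_ext M cot_term (fun t => (- th * c) * (xi t * cot (th * INR t))))
    by (intros; unfold cot_term; ring).
  rewrite sum_to_scal. f_equal.
  replace M with (S (M - 1)) at 1 2 3 by lia. unfold D_sum.
  apply sum_to_mul_cot. intros t Ht. apply sin_th_pos.
  assert (1 <= INR t <= INR M) by (split; [apply (le_INR 1) | apply le_INR]; lia). lra.
Qed.

Lemma small_t_error :
  Rabs (sum_to tau log_ratio - sum_to tau (fun t => cot_term t - log_tail t)) <= 30 / INR tau.
Proof.
  pose proof th_bounds. pose proof PI_bounds. pose proof th_mul_q.
  destruct INR_tau_bounds as [? [? ?]].
  rewrite <- sum_to_sub.
  eapply Rle_trans.
  { apply (Rabs_sum_to_le _ _ (fun _ => (1/2) ^ tau + 2 * th ^ 2 * (INR tau + 1) ^ 2)).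
    intros t Ht.
    apply (ln_sin_ratio_small_t th (c * xi t) t tau); [lra | apply Rabs_c_xi_le | exact Ht | apply th_tau_le_1]. }
  rewrite sum_to_const.
  assert (Hgeom : INR tau * (1/2) ^ tau <= 2 / INR tau).
  { pose proof (INR_sq_le_pow2 tau).
    assert (2 ^ tau * (1/2) ^ tau = 1)
      by (rewrite <- Rpow_mult_distr; replace (2 * (1/2)) with 1 by field; apply pow1).
    assert (0 < (1/2) ^ tau) by (apply pow_lt; lra).
    apply (Rle_div_r _ _ (INR tau)); [lra|]. nra. }
  assert (Hquad : INR tau * (th ^ 2 * (INR tau + 1) ^ 2) <= 14 / INR tau).
  { assert (Hy : th * (INR tau * (INR tau + 1)) <= 11/10 * PI).
    { rewrite <- th_mul_q. replace (11/10 * (th * INR q)) with (th * (11/10 * INR q)) by ring.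
      apply Rmult_le_compat_l; nra. }
    apply (Rle_div_r _ _ (INR tau)); [lra|].
    replace (INR tau * (th ^ 2 * (INR tau + 1) ^ 2) * INR tau) with ((th * (INR tau * (INR tau + 1))) ^ 2) by ring.
    assert (0 <= th * (INR tau * (INR tau + 1))) by (apply Rmult_le_pos; nra). nra. }
  replace (30 / INR tau) with (2 / INR tau + 2 * (14 / INR tau)) by (field; lra).
  lra.
Qed.

Lemma large_t_error :
  Rabs (sum_to (M - tau) (fun k => log_ratio (tau + k)%nat) - sum_to (M - tau) (fun k => cot_term (tau + k)%nat))
  <= 6 / INR tau.
Proof.
  pose proof th_bounds. pose proof PI_bounds. pose proof th_mul_q. pose proof INR_M_bounds.
  destruct tau_bounds as [? _]. destruct INR_tau_bounds as [? _].
  rewrite <- sum_to_sub.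
  eapply Rle_trans.
  { apply (Rabs_sum_to_le _ _ (fun k => th ^ 2 + 4 * / INR (tau + k) ^ 2)).
    intros k Hk.
    assert (11 <= INR (tau + k) <= INR M).
    { split; [replace 11 with (INR 11) by (simpl; lra)|]; apply le_INR; lia. }
    unfold log_ratio, cot_term.
    match goal with |- Rabs (?l - ?r) <= _ =>
      replace (l - r) with (l + th * (c * xi (tau + k)%nat) * cot (th * INR (tau + k))) by ring end.
    assert (th * INR (tau + k) <= th * INR M) by (apply Rmult_le_compat_l; lra).
    pose proof th_M_bounds.
    apply ln_sin_ratio_large_t; [lra | apply Rabs_c_xi_le | lra | lra]. }
  rewrite sum_to_add, sum_to_const, sum_to_scal.
  pose proof (sum_to_inv_sq_le tau (M - tau) ltac:(lia)).
  assert (0 < / INR (tau + (M - tau))) by (apply Rinv_0_lt_compat, lt_0_INR; lia).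
  assert (INR (M - tau) <= INR q) by (pose proof M_bounds; apply le_INR; lia).
  pose proof th_sq_q_le.
  assert (th ^ 2 * INR (M - tau) <= th ^ 2 * INR q) by (apply Rmult_le_compat_l; nra).
  replace (6 / INR tau) with (2 / INR tau + 4 * / INR tau) by (field; lra).
  lra.
Qed.

Lemma Rabs_sum_to_xi_le t : Rabs (sum_to t xi) <= INR t / 2.
Proof.
  replace (INR t / 2) with (INR t * (1/2)) by field. rewrite <- sum_to_const.
  apply Rabs_sum_to_le. intros; apply xi_bound.
Qed.

Lemma Rabs_D_sum_le : Rabs D_sum <= INR (M - 1) * (2 / th ^ 2).
Proof.
  pose proof th_bounds. pose proof th_M_bounds. pose proof PI_bounds. pose proof M_bounds.
  unfold D_sum. rewrite <- sum_to_const. apply Rabs_sum_to_le. intros t Ht.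
  assert (1 <= INR t /\ INR t + 1 <= INR M) as [] by
    (rewrite <- S_INR; split; [apply (le_INR 1) | apply le_INR]; lia).
  assert (th * (INR t + 1) <= th * INR M) by (apply Rmult_le_compat_l; lra).
  assert (th * INR t / 2 <= sin (th * INR t)) by (apply sin_ge_half; nra).
  assert (th * (INR t + 1) / 2 <= sin (th * INR (S t))) by (rewrite S_INR; apply sin_ge_half; nra).
  assert (Hprod : th ^ 2 * INR t / 4 <= sin (th * INR t) * sin (th * INR (S t))).
  { assert (th * INR t / 2 * (th * (INR t + 1) / 2) <= sin (th * INR t) * sin (th * INR (S t)))
      by (apply Rmult_le_compat; nra).
    assert (0 <= th ^ 2 * INR t) by (apply Rmult_le_pos; nra). nra. }
  rewrite Rabs_div, (Rabs_pos_eq (_ * _)) by nra.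
  apply (Rle_div_l _ _ (sin (th * INR t) * sin (th * INR (S t)))); [nra|].
  pose proof (Rabs_sum_to_xi_le t).
  replace (INR t / 2) with (2 / th ^ 2 * (th ^ 2 * INR t / 4)) in * by (field; lra).
  assert (0 < 2 / th ^ 2) by (apply Rdiv_lt_0_compat; nra).
  eapply Rle_trans; [eassumption | apply Rmult_le_compat_l; lra].
Qed.

Lemma cot_th_M_bounds : 0 <= cot (th * INR M) <= 2 * th.
Proof.
  pose proof th_M_bounds. pose proof th_bounds. pose proof PI_bounds.
  assert (Hcos : 0 <= cos (th * INR M) <= th).
  { rewrite <- sin_shift. pose proof (sin_le_id (PI / 2 - th * INR M) ltac:(lra)).
    pose proof (sin_ge_0 (PI / 2 - th * INR M) ltac:(lra) ltac:(lra)). lra. }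
  assert (Hsin : 1/2 <= sin (th * INR M)).
  { pose proof (sin_ge_half (th * INR M) ltac:(lra)). lra. }
  unfold cot. split; [apply Rdiv_le_0_compat; lra|].
  apply (Rle_div_l _ _ (sin (th * INR M))); nra.
Qed.

Lemma boundary_term_le : Rabs (th * c * (sum_to M xi * cot (th * INR M))) <= 1 / INR tau.
Proof.
  pose proof th_bounds. pose proof cot_th_M_bounds. pose proof (Rabs_sum_to_xi_le M).
  pose proof INR_M_bounds. pose proof th_sq_q_le. destruct INR_tau_bounds as [? _].
  rewrite !Rabs_mult, (Rabs_pos_eq th), (Rabs_pos_eq c), (Rabs_pos_eq (cot _)) by lra.
  assert (Rabs (sum_to M xi) * cot (th * INR M) <= INR M / 2 * (2 * th))
    by (apply Rmult_le_compat; try apply Rabs_pos; lra).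
  assert (0 <= Rabs (sum_to M xi) * cot (th * INR M)) by (apply Rmult_le_pos; [apply Rabs_pos | lra]).
  assert (th * c <= th) by nra.
  assert (th * c * (Rabs (sum_to M xi) * cot (th * INR M)) <= th * (INR M / 2 * (2 * th)))
    by (apply Rmult_le_compat; nra).
  replace (1 / INR tau) with (2 / INR tau / 2) by (field; lra).
  assert (th ^ 2 * (2 * INR M) <= th ^ 2 * INR q) by (apply Rmult_le_compat_l; nra).
  nra.
Qed.

Lemma sin_correction_le : Rabs (th * c * ((sin th - th) * D_sum)) <= 1 / INR tau.
Proof.
  pose proof th_bounds. pose proof PI_bounds. pose proof Rabs_D_sum_le.
  pose proof INR_M_bounds. pose proof th_sq_q_le. destruct INR_tau_bounds as [? _].
  assert (Hth : Rabs th = th) by (apply Rabs_pos_eq; lra).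
  pose proof (Rabs_sin_sub_id th) as Hsin. rewrite Hth in Hsin. specialize (Hsin ltac:(lra)).
  assert (INR (M - 1) <= INR q / 2).
  { assert (INR (M - 1) <= INR M) by (apply le_INR; lia). lra. }
  rewrite !Rabs_mult, (Rabs_pos_eq th), (Rabs_pos_eq c) by lra.
  assert (Rabs (sin th - th) * Rabs D_sum <= th ^ 3 / 6 * (INR q / 2 * (2 / th ^ 2))).
  { apply Rmult_le_compat; try apply Rabs_pos; [lra|].
    eapply Rle_trans; [eassumption|]. apply Rmult_le_compat_r; [|lra].
    apply Rdiv_le_0_compat; nra. }
  replace (th ^ 3 / 6 * (INR q / 2 * (2 / th ^ 2))) with (th * INR q / 6) in * by (field; lra).
  assert (0 <= Rabs (sin th - th) * Rabs D_sum) by (apply Rmult_le_pos; apply Rabs_pos).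
  assert (th * c <= th) by nra.
  assert (th * c * (Rabs (sin th - th) * Rabs D_sum) <= th * (th * INR q / 6))
    by (apply Rmult_le_compat; nra).
  assert (0 < 1 / INR tau) by (apply Rdiv_lt_0_compat; lra).
  replace (2 / INR tau) with (2 * (1 / INR tau)) in * by (field; lra).
  nra.
Qed.

Lemma ln_sine_product_expansion :
  Rabs (ln (Rabs (prod_to (q - 1) (fun t => sin (th * (INR t - c * xi t)) / sin (th * INR t))))
        - (- 2 * th ^ 2 * c * D_sum - 2 * sum_to tau log_tail))
  <= 76 / INR tau.
Proof.
  destruct tau_bounds as [[_ HtauM] _].
  assert (Hsplit : forall f, sum_to M f = sum_to tau f + sum_to (M - tau) (fun k => f (tau + k)%nat))
    by (intros; rewrite <- sum_to_split; f_equal; lia).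
  pose proof sum_cot_term_by_parts as HA. rewrite Hsplit in HA.
  rewrite ln_abs_prod_fold, Hsplit.
  pose proof small_t_error as E1. pose proof large_t_error as E2.
  pose proof boundary_term_le as E3. pose proof sin_correction_le as E4.
  rewrite sum_to_sub in E1. apply Rabs_le_between in E1, E2, E3, E4.
  apply Rabs_le. lra.
Qed.

End LogSineProduct.

Lemma cf_q_succ a k : cf_q a (S (S k)) = (cf_a a (S k) * cf_q a (S k) + cf_q a k)%nat.
Proof. reflexivity. Qed.

Lemma cf_p_succ a k : cf_p a (S (S k)) = (cf_a a (S k) * cf_p a (S k) + cf_p a k)%nat.
Proof. reflexivity. Qed.

Lemma cf_a_spec a k : 0 < gauss a k < 1 ->
  INR (cf_a a (S k)) = / gauss a k - gauss a (S k) /\ (1 <= cf_a a (S k))%nat.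
Proof.
  intros Hg. unfold cf_a. simpl pred. simpl gauss. unfold frac_part.
  assert (1 < / gauss a k) by (rewrite <- Rinv_1; apply Rinv_lt_contravar; lra).
  pose proof (base_Int_part (/ gauss a k)).
  assert (Hz : (0 < Int_part (/ gauss a k))%Z) by (apply lt_IZR; lra).
  rewrite INR_IZR_INZ, Z2Nat.id by lia. split; [ring | lia].
Qed.

Lemma cf_det a k :
  Rabs (INR (cf_p a (S (S k))) * INR (cf_q a (S k)) - INR (cf_p a (S k)) * INR (cf_q a (S (S k)))) = 1.
Proof.
  induction k as [|k IH].
  - rewrite cf_q_succ, cf_p_succ, Nat.mul_0_r. simpl.
    replace (1 * 1 - 0 * _) with 1 by ring. apply Rabs_R1.
  - rewrite (cf_q_succ a (S k)), (cf_p_succ a (S k)), !plus_INR, !mult_INR, <- IH, <- Rabs_Ropp.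
    f_equal. ring.
Qed.

Lemma frac_part_nat_sub (n : nat) y : frac_part y <> 0 -> frac_part (INR n - y) = 1 - frac_part y.
Proof.
  intros Hy. pose proof (base_fp y).
  destruct (Int_part_frac_part_spec (INR n - y) (Z.of_nat n - Int_part y - 1) (1 - frac_part y))
    as [_ E]; [lra | | symmetry; exact E].
  rewrite !minus_IZR, <- INR_IZR_INZ. pose proof (Rplus_Int_part_frac_part y). simpl. lra.
Qed.

Lemma frac_part_ne_0_of_det (P P' Q Q' t : nat) :
  Rabs (INR P * INR Q' - INR P' * INR Q) = 1 -> (1 <= t < Q)%nat ->
  frac_part (INR t * INR Q' / INR Q) <> 0.
Proof.
  intros Hdet Ht Hfrac. apply fp_nat in Hfrac as [z Hz].
  assert (0 < INR Q) by (apply lt_0_INR; lia).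
  assert (Hz' : INR t * INR Q' = IZR z * INR Q) by (rewrite <- Hz; field; lra).
  assert (HW : Rabs (INR Q * (INR P * IZR z - INR t * INR P')) = INR t).
  { assert (INR Q * (INR P * IZR z - INR t * INR P') = INR t * (INR P * INR Q' - INR P' * INR Q)) as ->.
    { transitivity (INR P * (IZR z * INR Q) - INR t * INR P' * INR Q); [ring|].
      rewrite <- Hz'. ring. }
    rewrite Rabs_mult, Hdet, Rabs_pos_eq by apply pos_INR. ring. }
  rewrite !INR_IZR_INZ, <- !mult_IZR, <- minus_IZR, <- mult_IZR, Rabs_Zabs in HW.
  apply eq_IZR in HW. rewrite Z.abs_mul, (Z.abs_eq (Z.of_nat Q)) in HW by lia.
  pose proof (Z.abs_nonneg (Z.of_nat P * z - Z.of_nat t * Z.of_nat P')).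
  set (w := Z.abs _) in *. assert (w = 0 \/ 1 <= w)%Z as [->|] by lia; nia.
Qed.

Lemma xi_bound alpha n t : Rabs (xi alpha n t) <= 1/2.
Proof. unfold xi. pose proof (base_fp (INR t * INR (cf_q alpha (pred n)) / INR (cf_q alpha n))). apply Rabs_le. lra. Qed.

Lemma xi_odd alpha m t :
  let q := cf_q alpha (S (S m)) in
  (1 <= t <= q - 1)%nat -> xi alpha (S (S m)) (q - t)%nat = - xi alpha (S (S m)) t.
Proof.
  intros q Ht. unfold xi. fold q. simpl pred.
  assert (0 < INR q) by (apply lt_0_INR; lia).
  rewrite minus_INR by lia.
  replace ((INR q - INR t) * INR (cf_q alpha (S m)) / INR q)
    with (INR (cf_q alpha (S m)) - INR t * INR (cf_q alpha (S m)) / INR q) by (field; lra).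
  rewrite frac_part_nat_sub; [lra|].
  apply (frac_part_ne_0_of_det (cf_p alpha (S (S m))) (cf_p alpha (S m))); [apply cf_det | lia].
Qed.

Section IrrationalExpansion.

Variable alpha : R.
Hypothesis alpha_bounds : 0 < alpha < 1.
Hypothesis alpha_irrational : forall p q : Z, q <> 0%Z -> alpha <> IZR p / IZR q.

Lemma gauss_cf_invariant k :
  0 < gauss alpha k < 1 /\
  alpha = (INR (cf_p alpha (S k)) + INR (cf_p alpha k) * gauss alpha k)
          / (INR (cf_q alpha (S k)) + INR (cf_q alpha k) * gauss alpha k) /\
  (1 <= cf_q alpha (S k))%nat.
Proof.
  induction k as [|k [Hg [Hid Hq]]]; [simpl; split; [lra | split; [field | lia]]|].
  destruct (cf_a_spec alpha k Hg) as [Ea Ha1].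
  assert (0 <= gauss alpha (S k) < 1) by (simpl; pose proof (base_fp (/ gauss alpha k)); lra).
  rewrite cf_q_succ, cf_p_succ.
  assert (1 <= INR (cf_q alpha (S k))) by (apply (le_INR 1); lia).
  pose proof (pos_INR (cf_q alpha k)). pose proof (pos_INR (cf_p alpha k)).
  assert (Hid' : alpha =
    (INR (cf_a alpha (S k) * cf_p alpha (S k) + cf_p alpha k) + INR (cf_p alpha (S k)) * gauss alpha (S k))
    / (INR (cf_a alpha (S k) * cf_q alpha (S k) + cf_q alpha k) + INR (cf_q alpha (S k)) * gauss alpha (S k))).
  { rewrite !plus_INR, !mult_INR, Ea. rewrite Hid at 1. field. split; [lra | apply Rgt_not_eq; nra]. }
  split; [|split; [exact Hid' | nia]].
  split; [|lra].
  destruct (Rle_lt_dec (gauss alpha (S k)) 0) as [Hz|]; [exfalso|lra].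
  replace (gauss alpha (S k)) with 0 in Hid' by lra.
  rewrite !Rmult_0_r, !Rplus_0_r, !INR_IZR_INZ in Hid'.
  revert Hid'. apply alpha_irrational. lia.
Qed.

Lemma cf_q_ge k : (k <= cf_q alpha (S k))%nat.
Proof.
  enough (Hpair : (k <= cf_q alpha (S k) /\ S k <= cf_q alpha (S (S k)))%nat) by apply Hpair.
  induction k as [|k [_ IH]]; [split; [lia | apply (gauss_cf_invariant 1)]|].
  split; [exact IH|]. rewrite cf_q_succ.
  destruct (cf_a_spec alpha (S k) (proj1 (gauss_cf_invariant (S k)))) as [_ Ha1].
  destruct (gauss_cf_invariant k) as [_ [_ Hq]]. nia.
Qed.

Lemma c_n_bounds k : 0 <= c_n alpha (S k) <= 1.
Proof.
  destruct (gauss_cf_invariant k) as [Hg _]. unfold c_n, alpha_plus, alpha_minus. simpl pred.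
  assert (1 < / gauss alpha k) by (rewrite <- Rinv_1; apply Rinv_lt_contravar; lra).
  assert (0 <= INR (cf_q alpha k) / INR (cf_q alpha (S k)))
    by (apply Rdiv_le_0_compat; [apply pos_INR | apply lt_0_INR, (gauss_cf_invariant k)]).
  split; [left; apply Rinv_0_lt_compat; lra|].
  rewrite <- Rinv_1. apply Rinv_le_contravar; lra.
Qed.

Lemma Rabs_Lambda m :
  Rabs (Lambda alpha (S m)) = c_n alpha (S m) / INR (cf_q alpha (S m)).
Proof.
  destruct (gauss_cf_invariant (S m)) as [_ [Hid _]].
  destruct (gauss_cf_invariant m) as [Hg0 [_ Hq1]].
  destruct (cf_a_spec alpha m Hg0) as [Ea _].
  pose proof (cf_det alpha m) as Hdet.
  unfold Lambda, c_n, alpha_plus, alpha_minus. simpl pred.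
  rewrite cf_q_succ, cf_p_succ, !plus_INR, !mult_INR, Ea in Hid, Hdet.
  set (g0 := gauss alpha m) in *. set (g1 := gauss alpha (S m)) in *.
  set (Q1 := INR (cf_q alpha (S m))) in *. set (Q0 := INR (cf_q alpha m)) in *.
  set (P1 := INR (cf_p alpha (S m))) in *. set (P0 := INR (cf_p alpha m)) in *.
  assert (1 <= Q1) by (apply (le_INR 1); lia). assert (0 <= Q0) by apply pos_INR.
  assert (0 < Q1 / g0) by (apply Rdiv_lt_0_compat; lra).
  replace ((/ g0 - g1) * Q1 + Q0 + Q1 * g1) with (Q1 / g0 + Q0) in Hid by (field; lra).
  replace (Q1 * alpha - P1) with ((P0 * Q1 - P1 * Q0) / (Q1 / g0 + Q0)).
  2:{ rewrite Hid. field. split; [lra | apply Rgt_not_eq; nra]. }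
  rewrite Rabs_div, (Rabs_pos_eq (Q1 / g0 + Q0)) by lra.
  replace (P0 * Q1 - P1 * Q0) with (((/ g0 - g1) * P1 + P0) * Q1 - P1 * ((/ g0 - g1) * Q1 + Q0)) by ring.
  rewrite Hdet. field. split; [lra | split; [lra | apply Rgt_not_eq; nra]].
Qed.

Lemma B_n_eq m :
  let q := cf_q alpha (S m) in
  B_n alpha (S m)
  = Rabs (prod_to (q - 1) (fun t =>
      sin (PI / INR q * (INR t - c_n alpha (S m) * xi alpha (S m) t)) / sin (PI / INR q * INR t))).
Proof.
  intros q. unfold B_n. fold q. rewrite prodR_1_prod_to. f_equal.
  apply prod_to_ext. intros t _. unfold s_nt. rewrite Rabs_Lambda. fold q.
  replace (PI * INR t / INR q) with (PI / INR q * INR t) by (unfold Rdiv; ring).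
  match goal with |- 2 * sin ?x / _ = sin ?y / _ => replace x with y by (unfold Rdiv; ring) end.
  unfold Rdiv. rewrite Rinv_mult.
  match goal with |- 2 * ?a * (/ 2 * ?b) = _ =>
    replace (2 * a * (/ 2 * b)) with (2 * / 2 * (a * b)) by ring end.
  rewrite Rinv_r, Rmult_1_l by lra. reflexivity.
Qed.
End IrrationalExpansion.

Lemma sumR_log_tail (tau : nat) (y : nat -> R) : (1 <= tau)%nat ->
  sumR 1 tau (fun t => sumR 2 tau (fun j => / INR j * y t ^ j))
  = sum_to tau (fun t => sum_to tau (fun j => y t ^ j / INR j) - y t).
Proof.
  intros Htau. rewrite sumR_1_sum_to. apply sum_to_ext. intros t _.
  rewrite sumR_2_sum_to by exact Htau. simpl INR. rewrite Rinv_1, pow_1, Rmult_1_l.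
  f_equal. apply sum_to_ext. intros j _. unfold Rdiv. ring.
Qed.

Lemma sumR_D_alpha_minus alpha n m :
  sumR 1 m (fun t => D t (alpha_minus alpha n)
             / (sin (PI * INR t / INR (cf_q alpha n)) * sin (PI * INR (S t) / INR (cf_q alpha n))))
  = sum_to m (fun t => sum_to t (xi alpha n)
             / (sin (PI / INR (cf_q alpha n) * INR t) * sin (PI / INR (cf_q alpha n) * INR (S t)))).
Proof.
  rewrite sumR_1_sum_to. apply sum_to_ext. intros t _.
  unfold D, xi, alpha_minus. rewrite sumR_1_sum_to. unfold Rdiv.
  f_equal; [apply sum_to_ext; intros s _; do 2 f_equal | do 3 f_equal]; ring.
Qed.

Theorem lemma4p4 (alpha : R)
  (Ha : 0 < alpha < 1)
  (Hirr : forall (p q : Z), q <> 0%Z -> alpha <> IZR p / IZR q) :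
  exists (C : R) (N : nat), forall n : nat, (N <= n)%nat ->
    let q := INR (cf_q alpha n) in
    let c := c_n alpha n in
    let tau := tau_n alpha n in
    Rabs (ln (B_n alpha n)
          - ( - 2 * PI ^ 2 * (c / q ^ 2)
                * sumR 1 (M_n alpha n - 1)
                    (fun t => D t (alpha_minus alpha n)
                              / (sin (PI * INR t / q) * sin (PI * INR (S t) / q)))
              - 2 * sumR 1 tau (fun t =>
                      sumR 2 tau (fun j =>
                        / INR j * (c * xi alpha n t / INR t) ^ j))))
      <= C / INR tau.
Proof.
  exists 76, 101%nat. intros n Hn. cbv zeta.
  destruct n as [|[|m]]; [lia | lia |].
  assert (Hq : (100 <= cf_q alpha (S (S m)))%nat) by (pose proof (cf_q_ge alpha Ha Hirr (S m)); lia).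
  assert (Htau : (1 <= tau_n alpha (S (S m)))%nat) by (unfold tau_n; apply Nat.sqrt_le_square; lia).
  assert (0 < INR (cf_q alpha (S (S m)))) by (apply lt_0_INR; lia).
  rewrite (B_n_eq alpha Ha Hirr (S m)), sumR_D_alpha_minus, sumR_log_tail by exact Htau.
  replace (- 2 * PI ^ 2 * (c_n alpha (S (S m)) / INR (cf_q alpha (S (S m))) ^ 2))
    with (- 2 * (PI / INR (cf_q alpha (S (S m)))) ^ 2 * c_n alpha (S (S m))) by (field; lra).
  apply ln_sine_product_expansion; [exact Hq | apply c_n_bounds; auto | apply xi_bound | apply xi_odd].
Qed.
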